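(* Let $\omega=e^{2\pi i/3}$ and consider the six three-qubit states $$\tfrac{1}{\sqrt3}(|001\rangle+|010\rangle+|100\rangle),\ \tfrac{1}{\sqrt3}(|001\rangle+\omega|010\rangle+\omega^2|100\rangle),\ \tfrac{1}{\sqrt3}(|001\rangle+\omega^2|010\rangle+\omega|100\rangle),$$ $$\tfrac{1}{\sqrt3}(|000\rangle+|101\rangle+|110\rangle),\ \tfrac{1}{\sqrt3}(|000\rangle+\omega|101\rangle+\omega^2|110\rangle),\ \tfrac{1}{\sqrt3}(|000\rangle+\omega^2|101\rangle+\omega|110\rangle).$$ These states are mutually orthogonal, each is genuinely entangled and belongs to the W-class, and they form an unextendible entangled basis of $\mathbb{C}^2\otimes\mathbb{C}^2\otimes\mathbb{C}^2$. Moreover, the unextendibility is conserved across every bipartition: for each bipartition $A|BC$, $B|AC$, $C|AB$, the orthogonal complement of their span contains no pure state that is entangled with respect to that bipartition.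
   Context: $|v_1v_2v_3\rangle$ denotes $|v_1\rangle\otimes|v_2\rangle\otimes|v_3\rangle$ in the computational basis. A pure three-qubit state is genuinely entangled if it is not a product state across any bipartition. The W-class is the set of three-qubit pure states that can be obtained from $|W\rangle=\tfrac{1}{\sqrt3}(|001\rangle+|010\rangle+|100\rangle)$ by stochastic LOCC (SLOCC), i.e. by invertible local operators $A\otimes B\otimes C$ up to normalization. An unextendible entangled basis is a set of mutually orthogonal pure entangled states spanning a proper subspace whose orthogonal complement contains no entangled state. *)

From HB Require Import structures.
From mathcomp Require Import all_boot all_order all_algebra all_field.
Set Implicit Arguments. Unset Strict Implicit. Unset Printing Implicit Defensive.
Import Order.TTheory GRing.Theory Num.Theory.
Local Open Scope ring_scope.

(* A (not necessarily normalized) vector of C^2 (x) C^2 (x) C^2, given by its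
   coordinates psi i j k = <ijk|psi> in the computational basis. *)
Definition qstate := 'I_2 -> 'I_2 -> 'I_2 -> algC.

Definition ket (a b c : nat) : qstate :=
  fun x y z => ((x == a :> nat) && (y == b :> nat) && (z == c :> nat))%:R.

Definition inner (u v : qstate) : algC :=
  \sum_(i < 2) \sum_(j < 2) \sum_(k < 2) (u i j k)^* * v i j k.

Definition nonzero_state (v : qstate) : Prop := exists i j k, v i j k != 0.

Definition fully_product (v : qstate) : Prop :=
  exists a b c : 'I_2 -> algC, forall i j k, v i j k = a i * b j * c k.

Definition product_A_BC (v : qstate) : Prop :=
  exists (a : 'I_2 -> algC) (p : 'I_2 -> 'I_2 -> algC),
    forall i j k, v i j k = a i * p j k.
Definition product_B_AC (v : qstate) : Prop :=
  exists (b : 'I_2 -> algC) (p : 'I_2 -> 'I_2 -> algC),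
    forall i j k, v i j k = b j * p i k.
Definition product_C_AB (v : qstate) : Prop :=
  exists (c : 'I_2 -> algC) (p : 'I_2 -> 'I_2 -> algC),
    forall i j k, v i j k = c k * p i j.

Definition entangled (v : qstate) : Prop :=
  nonzero_state v /\ ~ fully_product v.

Definition genuinely_entangled (v : qstate) : Prop :=
  [/\ nonzero_state v, ~ product_A_BC v, ~ product_B_AC v & ~ product_C_AB v].

Definition local_op (A B C : 'M[algC]_2) (v : qstate) : qstate :=
  fun i j k => \sum_(i' < 2) \sum_(j' < 2) \sum_(k' < 2)
                 A i i' * B j j' * C k k' * v i' j' k'.

Definition s3 : algC := (sqrtC 3)^-1.

Definition W_state : qstate :=
  fun x y z => s3 * (ket 0 0 1 x y z + ket 0 1 0 x y z + ket 1 0 0 x y z).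

(* SLOCC orbit of |W>, up to normalization *)
Definition W_class (v : qstate) : Prop :=
  exists (A B C : 'M[algC]_2) (c : algC),
    [/\ A \in unitmx, B \in unitmx, C \in unitmx, c != 0 &
        forall i j k, v i j k = c * local_op A B C W_state i j k].

Definition in_complement n (S : 'I_n -> qstate) (v : qstate) : Prop :=
  forall l, inner (S l) v = 0.

(* Unextendible entangled basis: mutually orthogonal (normalized) pure entangled
   states spanning a proper subspace (equivalently: the orthogonal complement
   contains a nonzero vector) whose orthogonal complement contains no
   entangled state. *)
Definition unextendible_entangled_basis n (S : 'I_n -> qstate) : Prop :=
  [/\ forall l, inner (S l) (S l) = 1,
      forall l m, l != m -> inner (S l) (S m) = 0,
      forall l, entangled (S l),
      exists v, nonzero_state v /\ in_complement S v
    & forall v, in_complement S v -> ~ entangled v].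

Definition omega : algC := (-1 + 'i * sqrtC 3) / 2.

Definition Wtype (c1 c2 c3 : algC) : qstate :=
  fun x y z => s3 * (c1 * ket 0 0 1 x y z + c2 * ket 0 1 0 x y z
                     + c3 * ket 1 0 0 x y z).
Definition Wtype' (c1 c2 c3 : algC) : qstate :=
  fun x y z => s3 * (c1 * ket 0 0 0 x y z + c2 * ket 1 0 1 x y z
                     + c3 * ket 1 1 0 x y z).

Definition six_states (l : 'I_6) : qstate :=
  match val l with
  | 0 => Wtype 1 1 1
  | 1 => Wtype 1 omega (omega ^+ 2)
  | 2 => Wtype 1 (omega ^+ 2) omega
  | 3 => Wtype' 1 1 1
  | 4 => Wtype' 1 omega (omega ^+ 2)
  | _ => Wtype' 1 (omega ^+ 2) omega
  end.

(* The first three states are the discrete Fourier transform, over the cube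
   roots of unity, of the basis triple |001>, |010>, |100>; the last three that
   of |000>, |101>, |110>.  Hence they are orthonormal and span exactly the
   span of these six basis vectors, whose orthogonal complement
   C^2 (x) |1> (x) |1> consists of fully product states only.  Each state is
   |W> up to diagonal local operators (and a bit flip of the first qubit for the
   last three), and it is not a product across a cut because some 2x2 minor of
   the corresponding matricization does not vanish. *)

From mathcomp Require Import all_boot all_order all_algebra all_field.
From mathcomp Require Import ring perm.
Import GRing.Theory Num.Theory.
Local Open Scope ring_scope.

Notation i0 := (@ord0 1).
Notation i1 := (@ord_max 1).

Lemma ord2P (i : 'I_2) : i = i0 \/ i = i1.
Proof. by case: i => [[|[|//]] ?]; [left | right]; apply: val_inj. Qed.

Lemma big_ord2 (R : nmodType) (f : 'I_2 -> R) : \sum_(i < 2) f i = f i0 + f i1.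
Proof. by rewrite big_ord_recr big_ord1; congr (f _ + _); apply: val_inj. Qed.

Lemma conj_s3 : s3^* = s3.
Proof. by apply/conj_Creal; rewrite realV ger0_real // sqrtC_ge0 ler0n. Qed.

Lemma s3_neq0 : s3 != 0.
Proof. by rewrite invr_eq0 sqrtC_eq0 pnatr_eq0. Qed.

Lemma s3_sqr : 3 * s3 ^+ 2 = 1.
Proof. by rewrite exprVn sqrtCK mulfV // pnatr_eq0. Qed.

Lemma omega_sqr : omega ^+ 2 = - omega - 1.
Proof.
have i3 : ('i * sqrtC 3) ^+ 2 = - 3 :> algC by rewrite exprMn sqrCi sqrtCK mulN1r.
by rewrite /omega; field: i3.
Qed.

Lemma omega_neq0 : omega != 0.
Proof.
apply: contra_eq_neq omega_sqr => ->.
by rewrite expr0n /= oppr0 sub0r eq_sym oppr_eq0 oner_eq0.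
Qed.

Lemma conj_omega : omega^* = omega ^+ 2.
Proof.
have -> : omega ^+ 2 = (-1 - 'i * sqrtC 3) / 2 by rewrite omega_sqr /omega; field.
rewrite /omega rmorphM rmorphD rmorphN1 /= rmorphM /= conjCi fmorphV rmorph_nat.
by rewrite (conj_Creal (sqrtC_real _)) ?mulNr ?ler0n.
Qed.

Lemma conj_omega2 : (omega ^+ 2)^* = omega.
Proof. by rewrite rmorphXn /= conj_omega -exprM; ring: omega_sqr. Qed.

Lemma cube_root_dft_inj {R : fieldType} {w x y z : R} :
  3 != 0 :> R -> w ^+ 2 = - w - 1 ->
  x + y + z = 0 -> x + w ^+ 2 * y + w * z = 0 -> x + w * y + w ^+ 2 * z = 0 ->
  [/\ x = 0, y = 0 & z = 0].
Proof.
move=> /negPf n3 w2 e0 e1 e2.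
have cancel3 (t : R) : 3 * t = 0 -> t = 0 by move/eqP; rewrite mulf_eq0 n3 => /eqP.
have ex : 3 * x = (x + y + z) + (x + w ^+ 2 * y + w * z) + (x + w * y + w ^+ 2 * z).
  by ring: w2.
have ey : 3 * y =
    (x + y + z) + w * (x + w ^+ 2 * y + w * z) + w ^+ 2 * (x + w * y + w ^+ 2 * z).
  by ring: w2.
have ez : 3 * z =
    (x + y + z) + w ^+ 2 * (x + w ^+ 2 * y + w * z) + w * (x + w * y + w ^+ 2 * z).
  by ring: w2.
rewrite e0 e1 e2 !mulr0 !addr0 in ex ey ez.
by split; apply: cancel3.
Qed.

Lemma innerE u v : inner u v =
  (u i0 i0 i0)^* * v i0 i0 i0 + (u i0 i0 i1)^* * v i0 i0 i1 +
  (u i0 i1 i0)^* * v i0 i1 i0 + (u i0 i1 i1)^* * v i0 i1 i1 +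
  (u i1 i0 i0)^* * v i1 i0 i0 + (u i1 i0 i1)^* * v i1 i0 i1 +
  (u i1 i1 i0)^* * v i1 i1 i0 + (u i1 i1 i1)^* * v i1 i1 i1.
Proof. by rewrite /inner !big_ord2 !addrA. Qed.

Lemma inner_Wtype c1 c2 c3 v : inner (Wtype c1 c2 c3) v =
  s3 * (c1^* * v i0 i0 i1 + c2^* * v i0 i1 i0 + c3^* * v i1 i0 i0).
Proof.
rewrite innerE /Wtype /ket /= !(mulr0, mulr1, addr0, add0r) !rmorphM /=.
by rewrite conj_s3 conjC0; ring.
Qed.

Lemma inner_Wtype' c1 c2 c3 v : inner (Wtype' c1 c2 c3) v =
  s3 * (c1^* * v i0 i0 i0 + c2^* * v i1 i0 i1 + c3^* * v i1 i1 i0).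
Proof.
rewrite innerE /Wtype' /ket /= !(mulr0, mulr1, addr0, add0r) !rmorphM /=.
by rewrite conj_s3 conjC0; ring.
Qed.

Lemma inner_six_states l m : inner (six_states l) (six_states m) = (l == m)%:R.
Proof.
case: l m => [[|[|[|[|[|[|//]]]]]] ?] [[|[|[|[|[|[|//]]]]]] ?];
  rewrite /six_states /= ?inner_Wtype ?inner_Wtype' /Wtype /Wtype' /ket /=
    ?conjC1 ?conj_omega ?conj_omega2; ring: omega_sqr s3_sqr.
Qed.

Lemma fully_product_A_BC v : fully_product v -> product_A_BC v.
Proof. by case=> a [b [c h]]; exists a, (fun j k => b j * c k) => i j k; rewrite h mulrA. Qed.

Lemma fully_product_B_AC v : fully_product v -> product_B_AC v.
Proof. by case=> a [b [c h]]; exists b, (fun i k => a i * c k) => i j k; rewrite h; ring. Qed.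

Lemma fully_product_C_AB v : fully_product v -> product_C_AB v.
Proof. by case=> a [b [c h]]; exists c, (fun i j => a i * b j) => i j k; rewrite h mulrC. Qed.

Lemma genuinely_entangled_entangled v : genuinely_entangled v -> entangled v.
Proof. by case=> nz notA _ _; split=> // /fully_product_A_BC. Qed.

Lemma not_product_A_BC v i j k i' j' k' :
  v i j k * v i' j' k' != v i j' k' * v i' j k -> ~ product_A_BC v.
Proof. by move=> /eqP minor [a [p h]]; apply: minor; rewrite !h; ring. Qed.

Lemma not_product_B_AC v i j k i' j' k' :
  v i j k * v i' j' k' != v i' j k' * v i j' k -> ~ product_B_AC v.
Proof. by move=> /eqP minor [b [p h]]; apply: minor; rewrite !h; ring. Qed.

Lemma not_product_C_AB v i j k i' j' k' :
  v i j k * v i' j' k' != v i' j' k * v i j k' -> ~ product_C_AB v.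
Proof. by move=> /eqP minor [c [p h]]; apply: minor; rewrite !h; ring. Qed.

Lemma genuinely_entangled_Wtype c1 c2 c3 : c1 != 0 -> c2 != 0 -> c3 != 0 ->
  genuinely_entangled (Wtype c1 c2 c3).
Proof.
move=> c1n0 c2n0 c3n0.
split; [exists i0, i0, i1 | apply: (@not_product_A_BC _ i0 i0 i1 i1 i0 i0)
       | apply: (@not_product_B_AC _ i0 i1 i0 i0 i0 i1)
       | apply: (@not_product_C_AB _ i0 i0 i1 i0 i1 i0)];
  by rewrite /Wtype /ket /= ?(mulr0, mulr1, mul0r, addr0, add0r) ?mulf_neq0 ?s3_neq0.
Qed.

Lemma genuinely_entangled_Wtype' c1 c2 c3 : c1 != 0 -> c2 != 0 -> c3 != 0 ->
  genuinely_entangled (Wtype' c1 c2 c3).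
Proof.
move=> c1n0 c2n0 c3n0.
split; [exists i0, i0, i0 | apply: (@not_product_A_BC _ i0 i0 i0 i1 i0 i1)
       | apply: (@not_product_B_AC _ i1 i1 i0 i0 i0 i0)
       | apply: (@not_product_C_AB _ i1 i0 i1 i0 i0 i0)];
  by rewrite /Wtype' /ket /= ?(mulr0, mulr1, mul0r, addr0, add0r) ?mulf_neq0 ?s3_neq0.
Qed.

Lemma six_states_shape l : exists c2 c3 : algC,
  [/\ c2 != 0, c3 != 0 & six_states l = Wtype 1 c2 c3 \/ six_states l = Wtype' 1 c2 c3].
Proof.
have w2n0 : omega ^+ 2 != 0 by rewrite expf_neq0 ?omega_neq0.
case: l => [[|[|[|[|[|[|//]]]]]] ?]; rewrite /six_states /=;
  [ exists 1, 1 | exists omega, (omega ^+ 2) | exists (omega ^+ 2), omega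
  | exists 1, 1 | exists omega, (omega ^+ 2) | exists (omega ^+ 2), omega ];
  split; rewrite ?oner_neq0 ?omega_neq0 //; by [left | right].
Qed.

Lemma genuinely_entangled_six_states l : genuinely_entangled (six_states l).
Proof.
have [c2 [c3 [c2n0 c3n0 [->|->]]]] := six_states_shape l.
- by apply: genuinely_entangled_Wtype; rewrite ?oner_neq0.
- by apply: genuinely_entangled_Wtype'; rewrite ?oner_neq0.
Qed.

Lemma sum_diag_mx (R : pzSemiRingType) n (d : 'rV[R]_n) (F : 'I_n -> R) i :
  \sum_j diag_mx d i j * F j = d 0 i * F i.
Proof.
rewrite (bigD1 i) //= big1 ?addr0 => [|j /negPf ji]; rewrite mxE ?eqxx //.
by rewrite eq_sym ji mulr0n mul0r.
Qed.

Lemma sum_perm_mx (R : pzSemiRingType) n (s : {perm 'I_n}) (F : 'I_n -> R) i :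
  \sum_j perm_mx s i j * F j = F (s i).
Proof.
rewrite (bigD1 (s i)) //= big1 ?addr0 => [|j /negPf ji]; rewrite !mxE ?eqxx ?mul1r //.
by rewrite eq_sym ji mul0r.
Qed.

Lemma local_opE A B C v i j k : local_op A B C v i j k =
  \sum_i' A i i' * \sum_j' B j j' * \sum_k' C k k' * v i' j' k'.
Proof.
rewrite /local_op; apply: eq_bigr => i' _; rewrite mulr_sumr; apply: eq_bigr => j' _.
by rewrite !mulr_sumr; apply: eq_bigr => k' _; rewrite !mulrA.
Qed.

Definition phase (x : algC) : 'M[algC]_2 := diag_mx (\row_(i < 2) x ^+ i).

Definition flip : 'M[algC]_2 := perm_mx (tperm i0 i1).

Lemma phase_unit x : x != 0 -> phase x \in unitmx.
Proof.
move=> xn0; rewrite unitmxE det_diag unitfE.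
by apply/prodf_neq0 => i _; rewrite mxE expf_neq0.
Qed.

Lemma W_class_Wtype c1 c2 c3 : c1 != 0 -> c2 != 0 -> c3 != 0 ->
  W_class (Wtype c1 c2 c3).
Proof.
move=> c1n0 c2n0 c3n0; exists (phase c3), (phase c2), (phase c1), 1.
split; rewrite ?phase_unit ?oner_neq0 // => i j k.
rewrite mul1r local_opE !sum_diag_mx !mxE.
by case: (ord2P i) => ->; case: (ord2P j) => ->; case: (ord2P k) => ->;
  rewrite /Wtype /W_state /ket /=; ring.
Qed.

Lemma W_class_Wtype' c2 c3 : c2 != 0 -> c3 != 0 -> W_class (Wtype' 1 c2 c3).
Proof.
move=> c2n0 c3n0; exists flip, (phase c3), (phase c2), 1.
split; rewrite ?phase_unit ?unitmx_perm ?oner_neq0 // => i j k.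
rewrite mul1r local_opE sum_perm_mx !sum_diag_mx !mxE.
by case: (ord2P i) => ->; case: (ord2P j) => ->; case: (ord2P k) => ->;
  rewrite ?tpermL ?tpermR /Wtype' /W_state /ket /=; ring.
Qed.

Lemma W_class_six_states l : W_class (six_states l).
Proof.
have [c2 [c3 [c2n0 c3n0 [->|->]]]] := six_states_shape l.
- by apply: W_class_Wtype; rewrite ?oner_neq0.
- exact: W_class_Wtype'.
Qed.

Lemma in_complement_six_states_fully_product v :
  in_complement six_states v -> fully_product v.
Proof.
have s3K (x : algC) : s3 * x = 0 -> x = 0.
  by move/eqP; rewrite mulf_eq0 (negPf s3_neq0) => /eqP.
move=> perp; move: (perp (@Ordinal 6 0 isT)) (perp (@Ordinal 6 1 isT))
  (perp (@Ordinal 6 2 isT)) (perp (@Ordinal 6 3 isT)) (perp (@Ordinal 6 4 isT))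
  (perp (@Ordinal 6 5 isT)).
rewrite /six_states /= !inner_Wtype !inner_Wtype' conjC1 conj_omega conj_omega2 !mul1r.
move=> /s3K e0 /s3K e1 /s3K e2 /s3K e3 /s3K e4 /s3K e5.
have n3 : 3 != 0 :> algC by rewrite pnatr_eq0.
have [v001 v010 v100] := cube_root_dft_inj n3 omega_sqr e0 e1 e2.
have [v000 v101 v110] := cube_root_dft_inj n3 omega_sqr e3 e4 e5.
exists (fun i => v i i1 i1), (fun j => (j == i1)%:R), (fun k => (k == i1)%:R) => i j k.
by case: (ord2P i) => ->; case: (ord2P j) => ->; case: (ord2P k) => ->;
  rewrite /= ?mulr1 ?mulr0 // ?v001 ?v010 ?v100 ?v000 ?v101 ?v110.
Qed.

Lemma ket011_in_complement : in_complement six_states (ket 0 1 1).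
Proof.
by case=> [[|[|[|[|[|[|//]]]]]] ?];
  rewrite /six_states /= ?inner_Wtype ?inner_Wtype' /ket /= !mulr0 !addr0 mulr0.
Qed.

Theorem theorem1 :
  [/\ forall l m : 'I_6, l != m -> inner (six_states l) (six_states m) = 0,
      forall l, genuinely_entangled (six_states l),
      forall l, W_class (six_states l),
      unextendible_entangled_basis six_states
    & forall v, nonzero_state v -> in_complement six_states v ->
        [/\ product_A_BC v, product_B_AC v & product_C_AB v]].
Proof.
have orth l m : l != m -> inner (six_states l) (six_states m) = 0.
  by rewrite inner_six_states => /negPf->.
split=> //.
- exact: genuinely_entangled_six_states.
- exact: W_class_six_states.
- split=> //.
  + by move=> l; rewrite inner_six_states eqxx.
  + by move=> l; apply/genuinely_entangled_entangled/genuinely_entangled_six_states.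
  + exists (ket 0 1 1); split; last exact: ket011_in_complement.
    by exists i0, i1, i1; rewrite /ket /= oner_neq0.
  + by move=> v /in_complement_six_states_fully_product vP [].
- move=> v _ /in_complement_six_states_fully_product vP.
  by split; [apply: fully_product_A_BC | apply: fully_product_B_AC
            | apply: fully_product_C_AB].
Qed.
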